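(* In the setting described in the context, let $Q(k)=W(k)-H\bar H W(k)$ and $\gamma=\lambda_{\max}\big(\mathbb{E}[Q(k)^TQ(k)]\big)$. Then $\gamma<1$.
   Context: Let $V=\{1,\ldots,N\}$, $N\ge 2$, and let $G_I=(V,E_I)$ be a connected undirected graph which is not complete, with adjacency matrix $A$; let $B=A+I_N$. For $i\in V$ let $N_I(i)$ be the set of neighbors of $i$ in $G_I$, $\tilde N_I(i)=N_I(i)\cup\{i\}$, $m_i=\deg_{G_I}(i)+1$, $m=\sum_{i=1}^N m_i$. For $i,j\in V$ set $s_{ij}=\sum_{l=1}^{j}B(i,l)+\sum_{r=1}^{i-1}m_r$ (the last sum is $0$ for $i=1$). Let $e_1,\ldots,e_m$ be the standard basis of $\mathbb{R}^m$ and define $E_j^i=e_{s_{ij}}$ if $j\in\tilde N_I(i)$ and $E_j^i=\mathbf{0}_m$ otherwise. Let $H=\big[\sum_{i=1}^N E_1^i,\ldots,\sum_{i=1}^N E_N^i\big]\in\mathbb{R}^{m\times N}$ and $\bar H=\mathrm{diag}(1/m_1,\ldots,1/m_N)H^T$. Let $G_C=(V,E_C)$ be a communication graph with $G_m\subseteq G_C\subseteq G_I$, where $G_m$ is a maximal triangle-free spanning subgraph of $G_I$ (a triangle-free spanning subgraph such that adding any edge of $G_I$ not in it creates a triangle); $N_C(i)$ denotes the neighbors of $i$ in $G_C$. For $i,j\in V$ let $\mathrm{ind}(i,j)=\tilde N_I(i)\cap\tilde N_I(j)$ and $W_{ij}=I_m-\tfrac12\sum_{l\in \mathrm{ind}(i,j)}(E_l^{i}-E_l^{j})(E_l^{i}-E_l^{j})^T$.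 The random matrix $W(k)$ is $W_{i_kj_k}$, where $i_k$ is drawn uniformly at random from $V$ and then $j_k$ is drawn uniformly at random from $N_C(i_k)$; the expectation is with respect to this random choice. *)

From HB Require Import structures.
From mathcomp Require Import all_boot all_order all_algebra.
From mathcomp Require Import polyrcf.
Set Implicit Arguments. Unset Strict Implicit. Unset Printing Implicit Defensive.
Import Order.TTheory GRing.Theory Num.Theory.
Local Open Scope ring_scope.

(* Vertices V = {1..N} are represented by 'I_N (vertex v <-> ordinal v-1).
   Graphs are given by their (boolean) adjacency relation. *)

Section Defs.
Variable N : nat.
Implicit Types (e : rel 'I_N).

Definition simple_graph e := irreflexive e /\ symmetric e.
Definition connected_graph e := forall i j : 'I_N, connect e i j.
Definition complete_graph e := forall i j : 'I_N, i != j -> e i j.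
Definition subgraph (e1 e2 : rel 'I_N) := forall i j, e1 i j -> e2 i j.
Definition triangle_free e := forall i j k : 'I_N, ~ [&& e i j, e j k & e k i].
Definition maximal_triangle_free_spanning (eM eI : rel 'I_N) :=
  [/\ simple_graph eM, subgraph eM eI, triangle_free eM &
      forall i j, eI i j -> ~~ eM i j ->
        (* adding the edge {i,j} creates a triangle *)
        exists k, eM i k && eM k j].

Definition cnbhd e (i : 'I_N) : {set 'I_N} := [set j | e i j || (j == i)].
Definition Bmat e (i l : 'I_N) : nat := (e i l || (i == l)).
Definition mdeg e (i : 'I_N) : nat := #|cnbhd e i|.
Definition mtot e : nat := \sum_(i < N) mdeg e i.

(* s_{ij} (1-based position in R^m, as in the paper, with 1-based vertex
   labels i.+1, j.+1) *)
Definition spos e (i j : 'I_N) : nat :=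
  \sum_(l < N | (l <= j)%N) Bmat e i l + \sum_(r < N | (r < i)%N) mdeg e r.

Variable R : rcfType.

(* E_j^i = e_{s_ij} (standard basis vector, 1-based index) or 0 *)
Definition Evec e (i j : 'I_N) : 'cV[R]_(mtot e) :=
  \col_(k < mtot e) ((j \in cnbhd e i) && (k.+1 == spos e i j))%:R.

Definition Hmat e : 'M[R]_(mtot e, N) :=
  \matrix_(k < mtot e, j < N) \sum_(i < N) Evec e i j k 0.

Definition Hbar e : 'M[R]_(N, mtot e) :=
  \matrix_(i < N, k < mtot e) ((mdeg e i)%:R^-1 * Hmat e k i).

Definition Wmat e (i j : 'I_N) : 'M[R]_(mtot e) :=
  1%:M - 2%:R^-1 *: \sum_(l in cnbhd e i :&: cnbhd e j)
           ((Evec e i l - Evec e j l) *m (Evec e i l - Evec e j l)^T).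

Definition Qmat e (i j : 'I_N) : 'M[R]_(mtot e) :=
  Wmat e i j - Hmat e *m Hbar e *m Wmat e i j.

(* Expectation over i uniform in V, then j uniform in N_C(i). *)
Definition expect_pair (eC : rel 'I_N) n (X : 'I_N -> 'I_N -> 'M[R]_n) :
  'M[R]_n :=
  \sum_(i < N) (N%:R^-1 *:
     \sum_(j < N | eC i j) (#|[set j | eC i j]|%:R^-1 *: X i j)).

(* Largest (real) eigenvalue of a square matrix: the largest real root of
   its characteristic polynomial (rootsR lists the real roots increasingly). *)
Definition lambda_max n (M : 'M[R]_n) : R := last 0 (rootsR (char_poly M)).

End Defs.

From HB Require Import structures.
From mathcomp Require Import all_boot all_order all_algebra.
From mathcomp Require Import polyrcf ring.
Import Order.TTheory GRing.Theory Num.Theory.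
Set Implicit Arguments. Unset Strict Implicit. Unset Printing Implicit Defensive.

(* The positions s_ij enumerate the coordinates of R^m, so the vectors E_j^i
   (j in the closed neighbourhood of i) form its standard basis. Hence
   Hbar H = I, P = H Hbar is the orthogonal projection onto the range of H and,
   for i <> j, the vectors E_l^i - E_l^j are orthogonal of squared norm 2, so
   W_ij = I - Pi_ij with Pi_ij an orthogonal projection. Thus Q = (I - P)(I - Pi_ij)
   never increases the norm, and |Q x| = |x| forces Pi_ij x = 0 and P x = 0: the
   copies of each variable kept by i and j agree, and the copies of each
   variable sum to zero.
   The quadratic form of E[Q^T Q] at x averages |Q x|^2 over the communication
   edges, so it suffices to find, for each x <> 0, an edge with |Q x| < |x|.
   Otherwise the copies agree along all edges of G_C, hence along all of G_I,
   since each edge of G_I outside G_m closes a triangle of G_m. All copies of a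
   variable are then equal, and as they sum to zero, x = 0. *)

Lemma leq_sum_subpred (I : finType) (P Q : pred I) (F : I -> nat) :
  (forall i, P i -> Q i) -> \sum_(i | P i) F i <= \sum_(i | Q i) F i.
Proof.
move=> PQ; rewrite [leqRHS](bigID P) /= (eq_bigl P) ?leq_addr // => i.
by apply/andP/idP => [[]|Pi] //; rewrite PQ.
Qed.

Lemma leq_sum_add_pred (I : finType) (P Q : pred I) (F : I -> nat) i0 :
  (forall i, P i -> Q i) -> Q i0 -> ~~ P i0 ->
  \sum_(i | P i) F i + F i0 <= \sum_(i | Q i) F i.
Proof.
move=> PQ Qi0 nPi0; rewrite [leqRHS](bigD1 i0) //= addnC leq_add2l.
apply: leq_sum_subpred => i Pi; rewrite PQ //=.
by apply: contraNneq nPi0 => <-.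
Qed.

Section Slots.
Variables (N : nat) (e : rel 'I_N).
Implicit Types i j : 'I_N.

Definition nbhd_rank i j := \sum_(l < N | (l <= j)%N) Bmat e i l.
Definition block_offset i := \sum_(r < N | (r < i)%N) mdeg e r.

Lemma spos_split i j : spos e i j = nbhd_rank i j + block_offset i.
Proof. by []. Qed.

Lemma Bmat_mem i l : Bmat e i l = (l \in cnbhd e i).
Proof. by rewrite /Bmat inE eq_sym. Qed.

Lemma mdeg_sum i : mdeg e i = \sum_l Bmat e i l.
Proof.
rewrite /mdeg -sum1_card big_mkcond /=; apply: eq_bigr => l _.
by rewrite Bmat_mem; case: (l \in _).
Qed.

Lemma nbhd_rank_le i j : nbhd_rank i j <= mdeg e i.
Proof. by rewrite mdeg_sum; apply: leq_sum_subpred. Qed.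

Lemma nbhd_rank_gt0 i j : j \in cnbhd e i -> 0 < nbhd_rank i j.
Proof. by move=> ji; rewrite /nbhd_rank (bigD1 j) //= Bmat_mem ji. Qed.

Lemma nbhd_rank_lt i j j' : j < j' -> j' \in cnbhd e i -> nbhd_rank i j < nbhd_rank i j'.
Proof.
move=> jj' j'i.
have := @leq_sum_add_pred _ (fun l : 'I_N => l <= j) (fun l : 'I_N => l <= j') (Bmat e i) j'.
rewrite Bmat_mem j'i addn1; apply=> [l lj||] //; last by rewrite -ltnNge.
exact: leq_trans lj (ltnW jj').
Qed.

Lemma block_offset_lt i i' : i < i' -> block_offset i + mdeg e i <= block_offset i'.
Proof.
move=> ii'; apply: leq_sum_add_pred => [r ri||] //=; last by rewrite ltnn.
exact: ltn_trans ri ii'.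
Qed.

Lemma block_offset_le i : block_offset i + mdeg e i <= mtot e.
Proof. by apply: leq_sum_add_pred; rewrite /= ?ltnn. Qed.

Lemma spos_range i j : j \in cnbhd e i -> 0 < spos e i j <= mtot e.
Proof.
move=> ji; rewrite spos_split addn_gt0 nbhd_rank_gt0 //=.
by rewrite addnC (leq_trans _ (block_offset_le i)) // leq_add2l nbhd_rank_le.
Qed.

Lemma spos_lt_block i i' j j' : i < i' -> j' \in cnbhd e i' ->
  spos e i j < spos e i' j'.
Proof.
move=> ii' j'i'; rewrite !spos_split.
apply: (@leq_trans (block_offset i + mdeg e i).+1).
  by rewrite ltnS addnC leq_add2l nbhd_rank_le.
by rewrite -add1n; apply: leq_add; [exact: nbhd_rank_gt0 | exact: block_offset_lt].
Qed.

Lemma spos_inj i i' j j' : j \in cnbhd e i -> j' \in cnbhd e i' ->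
  spos e i j = spos e i' j' -> i = i' /\ j = j'.
Proof.
move=> ji j'i' eq_spos.
have [ii'|i'i|/val_inj eq_ii'] := ltngtP i i'.
- by move: (spos_lt_block j ii' j'i'); rewrite eq_spos ltnn.
- by move: (spos_lt_block j' i'i ji); rewrite eq_spos ltnn.
subst i'; split => //; move: eq_spos; rewrite !spos_split => /addIn eq_rank.
have [jj'|j'j|/val_inj //] := ltngtP j j'.
- by move: (nbhd_rank_lt jj' j'i'); rewrite eq_rank ltnn.
- by move: (nbhd_rank_lt j'j ji); rewrite eq_rank ltnn.
Qed.

Definition slots : {set 'I_N * 'I_N} := [set p | p.2 \in cnbhd e p.1].

Lemma in_slots p : (p \in slots) = (p.2 \in cnbhd e p.1).
Proof. by rewrite in_set. Qed.

Lemma card_slots : #|slots| = mtot e.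
Proof.
rewrite -sum1_card big_mkcond /=.
transitivity (\sum_(i < N) \sum_(j < N) (if j \in cnbhd e i then 1 else 0)).
  by rewrite pair_bigA; apply: eq_bigr => p _; rewrite in_slots.
by apply: eq_bigr => i _; rewrite /mdeg -sum1_card [RHS]big_mkcond.
Qed.

Lemma spos_surj (k : 'I_(mtot e)) : exists i j, j \in cnbhd e i /\ spos e i j = k.+1.
Proof.
pose slot (p : 'I_N * 'I_N) : 'I_(mtot e) := insubd k (spos e p.1 p.2).-1.
have slotE p : p \in slots -> (slot p).+1 = spos e p.1 p.2.
  rewrite in_slots => /spos_range/andP[s_gt0 s_le].
  by rewrite /slot val_insubd prednK // s_le /= prednK.
have slot_inj : {in slots &, injective slot}.
  move=> [i j] [i' j'] pS p'S /(congr1 (fun k : 'I_(mtot e) => k.+1)).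
  rewrite !slotE //; move: pS p'S; rewrite !in_slots => ji j'i' /(spos_inj ji j'i').
  by case=> /= -> ->.
have card_im : #|slot @: slots| = mtot e by rewrite card_in_imset // card_slots.
have : k \in slot @: slots.
  suff -> : slot @: slots = [set: 'I_(mtot e)] by rewrite inE.
  by apply/setP/subset_cardP; rewrite ?subsetT // card_im cardsT card_ord.
case/imsetP=> [[i j] pS ->]; exists i, j.
by rewrite slotE //; move: pS; rewrite in_slots.
Qed.

End Slots.

Local Open Scope ring_scope.

Section Euclidean.
Variables (R : realFieldType) (n : nat).
Implicit Types (a b c x : 'cV[R]_n) (P : 'M[R]_n).

Definition dotv a b : R := (a^T *m b) 0 0.

Lemma dotvE a b : dotv a b = \sum_k a k 0 * b k 0.
Proof. by rewrite /dotv mxE; apply: eq_bigr => k _; rewrite mxE. Qed.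

Lemma dotvC a b : dotv a b = dotv b a.
Proof. by rewrite !dotvE; apply: eq_bigr => k _; rewrite mulrC. Qed.

Lemma dotv0l x : dotv 0 x = 0.
Proof. by rewrite /dotv linear0 mul0mx mxE. Qed.

Lemma dotvDl a b c : dotv (a + b) c = dotv a c + dotv b c.
Proof. by rewrite /dotv linearD mulmxDl mxE. Qed.

Lemma dotvDr a b c : dotv c (a + b) = dotv c a + dotv c b.
Proof. by rewrite !(dotvC c) dotvDl. Qed.

Lemma dotvBl a b c : dotv (a - b) c = dotv a c - dotv b c.
Proof. by rewrite /dotv linearB /= mulmxBl !mxE. Qed.

Lemma dotvBr a b c : dotv c (a - b) = dotv c a - dotv c b.
Proof. by rewrite !(dotvC c) dotvBl. Qed.

Lemma dotv_suml (I : Type) (r : seq I) (Q : pred I) (F : I -> 'cV[R]_n) b :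
  dotv (\sum_(i <- r | Q i) F i) b = \sum_(i <- r | Q i) dotv (F i) b.
Proof. by rewrite /dotv linear_sum mulmx_suml summxE. Qed.

Lemma dotv_sumr (I : Type) (r : seq I) (Q : pred I) (F : I -> 'cV[R]_n) a :
  dotv a (\sum_(i <- r | Q i) F i) = \sum_(i <- r | Q i) dotv a (F i).
Proof. by rewrite dotvC dotv_suml; apply: eq_bigr => i _; rewrite dotvC. Qed.

Lemma dotv_delta k x : dotv (delta_mx k 0) x = x k 0.
Proof.
rewrite dotvE (bigD1 k) //= !mxE !eqxx mul1r big1 ?addr0 // => l nlk.
by rewrite mxE (negbTE nlk) mul0r.
Qed.

Lemma dotv_ge0 x : 0 <= dotv x x.
Proof. by rewrite dotvE; apply: sumr_ge0 => k _; rewrite -expr2 sqr_ge0. Qed.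

Lemma dotv_eq0 x : (dotv x x == 0) = (x == 0).
Proof.
apply/eqP/eqP => [x0|->]; last by rewrite dotvE big1 // => k _; rewrite mxE mul0r.
apply/matrixP => k l; rewrite ord1 mxE.
have sq_ge0 k' : true -> 0 <= x k' 0 * x k' 0 by rewrite -expr2 sqr_ge0.
by apply/eqP; rewrite -[_ == 0]orbb -mulf_eq0; apply/eqP; rewrite (psumr_eq0P sq_ge0) -?dotvE.
Qed.

Lemma dotv_gt0 x : x != 0 -> 0 < dotv x x.
Proof. by rewrite lt_def dotv_eq0 dotv_ge0 andbT. Qed.

Lemma dotv_gram (A : 'M[R]_n) x : (x^T *m (A^T *m A) *m x) 0 0 = dotv (A *m x) (A *m x).
Proof. by rewrite /dotv trmx_mul !mulmxA. Qed.

Definition orthoproj P : Prop := P^T = P /\ P *m P = P.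

Lemma orthoproj_pythagoras P x : orthoproj P ->
  dotv x x = dotv (P *m x) (P *m x) + dotv ((1%:M - P) *m x) ((1%:M - P) *m x).
Proof.
move=> [Psym Pidem].
have Px_perp : dotv (P *m x) ((1%:M - P) *m x) = 0.
  rewrite /dotv trmx_mul Psym mulmxA -(mulmxA _ P) mulmxBr mulmx1 Pidem subrr.
  by rewrite mulmx0 mul0mx mxE.
have {1 2}-> : x = P *m x + (1%:M - P) *m x by rewrite -mulmxDl addrC subrK mul1mx.
by rewrite dotvDl !dotvDr Px_perp dotvC Px_perp addr0 add0r.
Qed.

Section TwoProjections.
Variables P1 P2 : 'M[R]_n.
Hypotheses (P1_proj : orthoproj P1) (P2_proj : orthoproj P2).
Variable x : 'cV[R]_n.
Let y := (1%:M - P2) *m x.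
Let z := (1%:M - P1) *m y.

Lemma orthoproj_compl2_decomp :
  dotv x x = dotv z z + (dotv (P1 *m y) (P1 *m y) + dotv (P2 *m x) (P2 *m x)).
Proof.
rewrite (orthoproj_pythagoras x P2_proj) (orthoproj_pythagoras y P1_proj) -/z.
by rewrite addrC addrCA addrA.
Qed.

Lemma orthoproj_compl2_le : dotv z z <= dotv x x.
Proof. by rewrite orthoproj_compl2_decomp lerDl addr_ge0 ?dotv_ge0. Qed.

Lemma orthoproj_compl2_eq : dotv z z = dotv x x -> P1 *m x = 0 /\ P2 *m x = 0.
Proof.
rewrite orthoproj_compl2_decomp -{1}[dotv z z]addr0 => /addrI/esym/eqP.
rewrite paddr_eq0 ?dotv_ge0 // !dotv_eq0 => /andP[/eqP P1y0 /eqP P2x0].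
by move: P1y0; rewrite /y mulmxBl mul1mx P2x0 subr0.
Qed.

End TwoProjections.

Lemma orthoproj_gram_sum (I : finType) (A : {pred I}) (d : I -> 'cV[R]_n) (c : R) :
  c != 0 -> {in A &, forall l l', dotv (d l) (d l') = (l == l')%:R * c} ->
  orthoproj (c^-1 *: \sum_(l in A) d l *m (d l)^T).
Proof.
move=> c_neq0 d_orth; split.
  rewrite linearZ /= raddf_sum; congr (_ *: _); apply: eq_bigr => l _.
  by rewrite /= trmx_mul trmxK.
rewrite -scalemxAl -scalemxAr scalerA mulmx_suml scaler_sumr [RHS]scaler_sumr.
apply: eq_bigr => l Al; rewrite mulmx_sumr (bigD1 l) //= big1 ?addr0 => [|l' /andP[Al' l'l]].
  rewrite mulmxA -(mulmxA (d l)) [_ *m d l]mx11_scalar mul_mx_scalar -scalemxAl.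
  by rewrite scalerA -/(dotv _ _) d_orth // eqxx mul1r mulfVK.
rewrite mulmxA -(mulmxA (d l)) [_ *m d l']mx11_scalar -/(dotv _ _) d_orth //.
by rewrite eq_sym (negbTE l'l) mul0r mul_mx_scalar scale0r mul0mx.
Qed.

Lemma gram_sum_kernel (I : finType) (A : {pred I}) (d : I -> 'cV[R]_n) x :
  (\sum_(l in A) d l *m (d l)^T) *m x = 0 -> {in A, forall l, dotv (d l) x = 0}.
Proof.
move=> Sx0 l Al.
have sum_sq0 : \sum_(l in A) dotv (d l) x ^+ 2 = 0.
  transitivity ((x^T *m ((\sum_(l in A) d l *m (d l)^T) *m x)) 0 0).
    rewrite mulmx_suml mulmx_sumr summxE; apply: eq_bigr => l' _.
    rewrite !mulmxA -(mulmxA _ (d l')^T) mxE big_ord1.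
    by rewrite -[(x^T *m _) 0 0]/(dotv _ _) -[(_ *m x) 0 0]/(dotv _ _) dotvC expr2.
  by rewrite Sx0 mulmx0 mxE.
apply/eqP; rewrite -sqrf_eq0; apply/eqP; apply: (psumr_eq0P _ sum_sq0) Al => l' _.
exact: sqr_ge0.
Qed.

Lemma orthoproj_mul_linv m (A : 'M[R]_(n, m)) (B : 'M[R]_(m, n)) :
  B *m A = 1%:M -> (A *m B)^T = A *m B -> orthoproj (A *m B).
Proof. by move=> BA1 ABsym; split; rewrite // -mulmxA (mulmxA B) BA1 mul1mx. Qed.

End Euclidean.

Lemma lambda_max_lt1 (R : rcfType) n (M : 'M[R]_n) :
  (forall x : 'cV[R]_n, x != 0 -> (x^T *m M *m x) 0 0 < dotv x x) ->
  lambda_max M < 1.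
Proof.
move=> qM_lt; rewrite /lambda_max; case def_rts: (rootsR _) => [|r s] //=.
have : last r s \in rootsR (char_poly M) by rewrite def_rts mem_last.
move/root_roots; rewrite -eigenvalue_root_char => /eigenvalueP[v vM v_neq0].
have x_neq0 : v^T != 0 by rewrite -(inj_eq trmx_inj) trmxK linear0.
have := qM_lt _ x_neq0; rewrite trmxK vM -scalemxAl mxE -/(dotv v^T v^T) -{1}[v]trmxK.
by rewrite gtr_pMl ?dotv_gt0.
Qed.

Section Mean.
Variables (R : realFieldType) (I : finType).
Implicit Types (P : pred I) (g : I -> R) (c : R).

Definition mean P g : R := \sum_(j | P j) #|[set j | P j]|%:R^-1 * g j.

Lemma mean_cst P c : mean P (fun=> c) = (#|[set j | P j]| != 0)%:R * c.
Proof.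
rewrite /mean (eq_bigl (fun j => j \in [set j | P j])) => [|j]; last by rewrite inE.
rewrite sumr_const -mulrnAl; case: eqP => [->|/eqP S_neq0]; first by rewrite !mul0r.
by rewrite -mulr_natr mulVf ?pnatr_eq0.
Qed.

Lemma mean_le P g c : 0 <= c -> (forall j, P j -> g j <= c) -> mean P g <= c.
Proof.
move=> c_ge0 g_le; apply: (@le_trans _ _ (mean P (fun=> c))).
  by apply: ler_sum => j Pj; rewrite ler_wpM2l ?invr_ge0 ?g_le.
by rewrite mean_cst; case: eqP; rewrite ?mul0r ?mul1r.
Qed.

Lemma mean_lt P g c j0 : P j0 -> g j0 < c -> (forall j, P j -> g j <= c) ->
  mean P g < c.
Proof.
move=> Pj0 gj0_lt g_le.
have S_gt0 : (0 < #|[set j | P j]|)%N by rewrite (cardD1 j0) inE Pj0.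
apply: (@lt_le_trans _ _ (mean P (fun=> c))); last by rewrite mean_cst -lt0n S_gt0 mul1r.
rewrite /mean (bigD1 j0) // [ltRHS](bigD1 j0) //=.
rewrite ltr_leD ?ltr_pM2l ?invr_gt0 ?ltr0n //.
by apply: ler_sum => j /andP[Pj _]; rewrite ler_wpM2l ?invr_ge0 ?g_le.
Qed.

End Mean.

Section StandardBasis.
Variables (R : rcfType) (N : nat) (e : rel 'I_N).
Local Notation m := (mtot e).
Local Notation E := (Evec R e).
Implicit Types (i j : 'I_N) (x : 'cV[R]_m).

Lemma Evec_delta i j : j \in cnbhd e i ->
  exists2 k : 'I_m, k.+1 = spos e i j & E i j = delta_mx k 0.
Proof.
move=> ji; have /andP[s_gt0 s_le] := spos_range ji.
have k_lt : ((spos e i j).-1 < m)%N by rewrite prednK.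
exists (Ordinal k_lt); first by rewrite /= prednK.
apply/matrixP => k' t; rewrite ord1 !mxE ji eqxx andbT /=.
by rewrite -val_eqE /= -[in LHS](prednK s_gt0) eqSS.
Qed.

Lemma Evec_notin i j : j \notin cnbhd e i -> E i j = 0.
Proof. by move=> jNi; apply/matrixP => k t; rewrite !mxE (negbTE jNi). Qed.

Lemma dotv_Evec i j i' j' :
  dotv (E i j) (E i' j') = ((j \in cnbhd e i) && (i == i') && (j == j'))%:R.
Proof.
have [ji|jNi] := boolP (j \in cnbhd e i); last by rewrite Evec_notin // dotv0l.
have [j'i'|j'Ni'] := boolP (j' \in cnbhd e i'); last first.
  rewrite (Evec_notin j'Ni') (dotvC (E i j)) dotv0l.
  apply/esym/eqP; rewrite pnatr_eq0 eqb0.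
  by apply: contra j'Ni' => /andP[/andP[_ /eqP<-] /eqP<-].
have [k sk ->] := Evec_delta ji; have [k' sk' ->] := Evec_delta j'i'.
rewrite dotv_delta mxE eqxx andbT /=.
suff -> : (k == k') = (i == i') && (j == j') by [].
apply/idP/andP => [/eqP kk'|[/eqP ii' /eqP jj']].
  have [-> ->] : i = i' /\ j = j' by apply: (spos_inj ji j'i'); rewrite -sk -sk' kk'.
  by rewrite !eqxx.
by apply/eqP/val_inj/succn_inj; rewrite sk sk' ii' jj'.
Qed.

Lemma Evec_basis_eq0 x :
  (forall i j, j \in cnbhd e i -> dotv (E i j) x = 0) -> x = 0.
Proof.
move=> x_perp; apply/matrixP => k t; rewrite ord1 mxE.
have [i [j [ji sk]]] := spos_surj k.
have [k' sk' Eij] := Evec_delta ji.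
have -> : k = k' by apply/val_inj/succn_inj; rewrite sk' sk.
by rewrite -(dotv_delta k') -Eij x_perp.
Qed.

End StandardBasis.

Section Projections.
Variables (R : rcfType) (N : nat) (e : rel 'I_N).
Local Notation m := (mtot e).
Local Notation E := (Evec R e).
Local Notation H := (Hmat R e).
Local Notation Hb := (Hbar R e).
Implicit Types (i j : 'I_N) (x : 'cV[R]_m).

Lemma col_Hmat j : col j H = \sum_i E i j.
Proof. by apply/matrixP => k t; rewrite ord1 summxE !mxE. Qed.

Lemma mdeg_gt0 j : (0 < mdeg e j)%N.
Proof. by rewrite /mdeg (cardD1 j) inE eqxx orbT. Qed.

Lemma dotv_col_Hmat j j' : symmetric e ->
  dotv (col j H) (col j' H) = (j == j')%:R * (mdeg e j)%:R.
Proof.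
move=> e_sym; rewrite !col_Hmat dotv_suml.
have inner i : dotv (E i j) (\sum_i' E i' j') = ((j \in cnbhd e i) && (j == j'))%:R.
  rewrite dotv_sumr (bigD1 i) //= big1 ?addr0 => [|i' i'i]; rewrite dotv_Evec ?eqxx ?andbT //.
  by rewrite eq_sym (negbTE i'i) andbF.
under eq_bigr => i _ do rewrite inner.
have [eq_jj'|_] := eqVneq j j'; last by rewrite mul0r big1 // => i _; rewrite andbF.
subst j'.
rewrite mul1r /mdeg -sum1_card natr_sum [RHS]big_mkcond; apply: eq_bigr => i _.
by rewrite andbT !inE e_sym eq_sym; case: (_ || _).
Qed.

Lemma mdeg_neq0 j : (mdeg e j)%:R != 0 :> R.
Proof. by rewrite pnatr_eq0 -lt0n mdeg_gt0. Qed.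

Lemma Hbar_mulE x l : (Hb *m x) l 0 = (mdeg e l)%:R^-1 * dotv (col l H) x.
Proof.
rewrite mxE dotvE big_distrr /=; apply: eq_bigr => k _.
by rewrite !mxE mulrA.
Qed.

Lemma Hbar_Hmat : symmetric e -> Hb *m H = 1%:M.
Proof.
move=> e_sym; apply/matrixP => l j.
have -> : (Hb *m H) l j = (Hb *m col j H) l 0.
  by rewrite !mxE; apply: eq_bigr => k _; rewrite !mxE.
by rewrite Hbar_mulE dotv_col_Hmat // mulrCA mulVf ?mdeg_neq0 // mulr1 mxE.
Qed.

Lemma Hmat_Hbar_sym : (H *m Hb)^T = H *m Hb.
Proof.
apply/matrixP => k k'; rewrite !mxE; apply: eq_bigr => j _.
by rewrite !mxE; ring.
Qed.

Lemma orthoproj_Hmat_Hbar : symmetric e -> orthoproj (H *m Hb).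
Proof. by move=> e_sym; apply: orthoproj_mul_linv (Hbar_Hmat e_sym) Hmat_Hbar_sym. Qed.

Definition Wproj i j : 'M[R]_m := 2%:R^-1 *:
  \sum_(l in cnbhd e i :&: cnbhd e j) (E i l - E j l) *m (E i l - E j l)^T.

Lemma orthoproj_Wproj i j : i != j -> orthoproj (Wproj i j).
Proof.
move=> ij; apply: orthoproj_gram_sum; first by rewrite pnatr_eq0.
move=> l l'; rewrite !in_setI => /andP[li lj] /andP[l'i l'j].
rewrite dotvBl !dotvBr !dotv_Evec li lj !eqxx /= (negbTE ij) (eq_sym j) (negbTE ij) /=.
by rewrite subr0 sub0r opprK mulr_natr mulr2n.
Qed.

Lemma Qmat_compl i j : Qmat R e i j = (1%:M - H *m Hb) *m (1%:M - Wproj i j).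
Proof. by rewrite /Qmat mulmxBl mul1mx. Qed.

Section Isometry.
Hypothesis e_sym : symmetric e.
Variables (i j : 'I_N) (x : 'cV[R]_m).
Hypothesis ij : i != j.
Local Notation Q := (Qmat R e i j).

Lemma Qmat_contract : dotv (Q *m x) (Q *m x) <= dotv x x.
Proof.
rewrite Qmat_compl -mulmxA.
exact: (orthoproj_compl2_le (orthoproj_Hmat_Hbar e_sym) (orthoproj_Wproj ij)).
Qed.

Lemma Qmat_isometry : dotv (Q *m x) (Q *m x) = dotv x x ->
  {in cnbhd e i :&: cnbhd e j, forall l, dotv (E i l) x = dotv (E j l) x} /\
  forall l, \sum_k dotv (E k l) x = 0.
Proof.
rewrite Qmat_compl -mulmxA.
move/(orthoproj_compl2_eq (orthoproj_Hmat_Hbar e_sym) (orthoproj_Wproj ij)) => [Px0 Wx0].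
split=> [l lij | l].
  apply/eqP; rewrite -subr_eq0 -dotvBl; apply/eqP; move: l lij.
  apply: gram_sum_kernel; move/eqP: Wx0; rewrite -scalemxAl scaler_eq0 invr_eq0 pnatr_eq0 /=.
  by move/eqP.
have Hbx0 : Hb *m x = 0.
  by rewrite -[Hb]mul1mx -(Hbar_Hmat e_sym) -!mulmxA (mulmxA H) Px0 mulmx0.
have /eqP := congr1 (fun v : 'cV[R]_N => v l 0) Hbx0.
rewrite /= Hbar_mulE mxE mulf_eq0 invr_eq0 (negbTE (mdeg_neq0 l)) /=.
by rewrite col_Hmat dotv_suml => /eqP.
Qed.

End Isometry.

End Projections.

Section Graphs.
Variable N : nat.
Implicit Types (e eI eM eC : rel 'I_N).

Lemma connected_edge e : (1 < N)%N -> connected_graph e -> exists i j, e i j.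
Proof.
move=> N_gt1 e_conn; pose i0 : 'I_N := Ordinal (ltnW N_gt1).
have /connectP[[|k p] /= walk last_k] := e_conn i0 (Ordinal N_gt1).
  by move/(congr1 val): last_k.
by exists i0, k; case/andP: walk.
Qed.

Lemma maximal_triangle_free_edge eM eI i j :
  maximal_triangle_free_spanning eM eI -> eI i j -> exists k, eM i k.
Proof.
move=> [_ _ _ eM_max] ij; have [Mij|nMij] := boolP (eM i j); first by exists j.
by have [k /andP[Mik _]] := eM_max i j ij nMij; exists k.
Qed.

Lemma agreeing_copies_eq0 (R : numDomainType) eI eM eC (a : 'I_N -> 'I_N -> R) :
  maximal_triangle_free_spanning eM eI -> subgraph eM eC ->
  (forall i j, eC i j -> {in cnbhd eI i :&: cnbhd eI j, forall l, a i l = a j l}) ->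
  (forall l, \sum_(i | l \in cnbhd eI i) a i l = 0) ->
  forall i l, l \in cnbhd eI i -> a i l = 0.
Proof.
move=> [_ sMI _ eM_max] sMC agree col0.
have self l : l \in cnbhd eI l by rewrite inE eqxx orbT.
have nbhd i l : eI i l -> l \in cnbhd eI i by rewrite inE => ->.
have to_owner i l : l \in cnbhd eI i -> a i l = a l l.
  rewrite inE => /orP[il|/eqP-> //].
  have [Mil|nMil] := boolP (eM i l).
    by rewrite (agree i l (sMC _ _ Mil) l); last by rewrite in_setI (nbhd _ _ il) self.
  have [k /andP[Mik Mkl]] := eM_max i l il nMil.
  have kl := nbhd _ _ (sMI _ _ Mkl).
  rewrite (agree i k (sMC _ _ Mik) l); last by rewrite in_setI (nbhd _ _ il) kl.
  by rewrite (agree k l (sMC _ _ Mkl) l); last by rewrite in_setI kl self.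
have owner0 l : a l l = 0.
  have := col0 l; rewrite (eq_bigr (fun=> a l l)) => [|i]; last exact: to_owner.
  rewrite (eq_bigl (fun i => i \in [set i | l \in cnbhd eI i])) => [|i]; last by rewrite inE.
  move/eqP; rewrite sumr_const mulrn_eq0 => /orP[|/eqP-> //].
  by rewrite (cardD1 l) !inE eqxx orbT.
by move=> i l li; rewrite to_owner // owner0.
Qed.

End Graphs.

Lemma qform_expect_pair (R : rcfType) N (eC : rel 'I_N) n
    (X : 'I_N -> 'I_N -> 'M[R]_n) (x : 'cV[R]_n) :
  (x^T *m expect_pair eC X *m x) 0 0 =
  mean xpredT (fun i => mean (eC i) (fun j => (x^T *m X i j *m x) 0 0)).
Proof.
have card_all : #|[set i : 'I_N | xpredT i]| = N.
  by rewrite -[RHS]card_ord -cardsT; apply: eq_card => i; rewrite !inE.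
rewrite /expect_pair /mean card_all mulmx_sumr mulmx_suml summxE; apply: eq_bigr => i _.
rewrite -scalemxAr -scalemxAl mxE mulmx_sumr mulmx_suml summxE; congr (_ * _).
by apply: eq_bigr => j _; rewrite -scalemxAr -scalemxAl mxE.
Qed.

Section CommunicationEdges.
Variables (R : rcfType) (N : nat) (eI eM eC : rel 'I_N).
Hypotheses (N_gt1 : (1 < N)%N) (eI_simple : simple_graph eI) (eI_conn : connected_graph eI).
Hypotheses (eM_max : maximal_triangle_free_spanning eM eI).
Hypotheses (sMC : subgraph eM eC) (sCI : subgraph eC eI).
Local Notation Q := (Qmat R eI).

Lemma eC_neq i j : eC i j -> i != j.
Proof. by move/sCI; apply: contraTneq => ->; rewrite eI_simple.1. Qed.

Lemma Qmat_contract_edge i j (x : 'cV[R]_(mtot eI)) :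
  eC i j -> dotv (Q i j *m x) (Q i j *m x) <= dotv x x.
Proof. by move=> C; apply: (Qmat_contract eI_simple.2 x (eC_neq C)). Qed.

Lemma Qmat_common_isometry_eq0 (x : 'cV[R]_(mtot eI)) :
  (forall i j, eC i j -> dotv (Q i j *m x) (Q i j *m x) = dotv x x) -> x = 0.
Proof.
move=> Q_iso; have eI_sym := eI_simple.2.
have iso i j (C : eC i j) := Qmat_isometry eI_sym (eC_neq C) (Q_iso _ _ C).
have [i0 [j0 C0]] : exists i j, eC i j.
  have [i [j /(maximal_triangle_free_edge eM_max) [k Mik]]] := connected_edge N_gt1 eI_conn.
  by exists i, k; apply: sMC.
apply: Evec_basis_eq0 => i l li.
apply: (agreeing_copies_eq0 (a := fun i l => dotv (Evec R eI i l) x) eM_max sMC _ _ li).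
  by move=> i' j' C; case: (iso _ _ C).
move=> l'; have [_ /(_ l') col0] := iso _ _ C0; rewrite -[in RHS]col0.
rewrite [RHS](bigID (fun k => l' \in cnbhd eI k)) /= [X in _ = _ + X]big1 ?addr0 //.
by move=> k /Evec_notin->; apply: dotv0l.
Qed.

Lemma Qmat_strict_contraction (x : 'cV[R]_(mtot eI)) : x != 0 ->
  exists i j, eC i j /\ dotv (Q i j *m x) (Q i j *m x) < dotv x x.
Proof.
move=> x_neq0.
have [/existsP[i /existsP[j /andP[C lt_ij]]]|no_strict] :=
  boolP [exists i, exists j, eC i j && (dotv (Q i j *m x) (Q i j *m x) < dotv x x)].
  by exists i, j.
case/eqP: x_neq0; apply: Qmat_common_isometry_eq0 => i j C; apply/eqP.
rewrite eq_le Qmat_contract_edge //=.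
by move/existsPn/(_ i)/existsPn/(_ j): no_strict; rewrite C leNgt.
Qed.

End CommunicationEdges.

Unset Implicit Arguments.

Theorem lemma6 (R : rcfType) (N : nat) (eI eM eC : rel 'I_N) :
  (2 <= N)%N ->
  simple_graph eI -> connected_graph eI -> ~ complete_graph eI ->
  maximal_triangle_free_spanning eM eI ->
  symmetric eC -> subgraph eM eC -> subgraph eC eI ->
  lambda_max (expect_pair eC
     (fun i j => (Qmat R eI i j)^T *m Qmat R eI i j)) < 1.
Proof.
move=> N_gt1 eI_simple eI_conn _ eM_max _ sMC sCI.
have Q_le := Qmat_contract_edge (R := R) eI_simple sCI.
apply: lambda_max_lt1 => x x_neq0; rewrite qform_expect_pair.
have [i0 [j0 [C0 lt0]]] :=
  Qmat_strict_contraction N_gt1 eI_simple eI_conn eM_max sMC sCI x_neq0.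
apply: (mean_lt (j0 := i0)) => [//||i _].
  apply: (mean_lt (j0 := j0)) => [||j C]; first exact: C0.
    by rewrite dotv_gram.
  by rewrite dotv_gram; apply: Q_le.
apply: mean_le => [|j C]; first exact: dotv_ge0.
by rewrite dotv_gram; apply: Q_le.
Qed.
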